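(* Let $k>0$, $N\in\mathbb{N}^+$, $h=\frac{1}{N+1}$, and let $\mathcal{A}_h$ be the $(N+1)\times(N+1)$ matrix defined below acting on $\mathbb{Y}_h=\mathbb{C}^{N+1}$ with the inner product $\langle\cdot,\cdot\rangle_{\mathbb{Y}_h}$ defined below. Then for every $Y_h=(y_1,\dots,y_{N+1})^\top\in\mathbb{Y}_h$, $$\mathrm{Re}\,\langle\mathcal{A}_hY_h,Y_h\rangle_{\mathbb{Y}_h}=-k|y_{N+1}|^2,$$ so $\mathcal{A}_h$ is dissipative on $\mathbb{Y}_h$ for every such $h\in(0,1)$.
   Context: Let $D_h$ be the $(N+1)\times(N+1)$ lower bidiagonal matrix $D_h=\frac12(\text{ones on the diagonal and on the first subdiagonal})$, i.e. $(D_hY)_j=\frac{y_{j-1}+y_j}{2}$ with the convention $y_0=0$; and let $M_h=\frac1h(\text{$-1$ on the diagonal, $1$ on the first superdiagonal})$, an $(N+1)\times(N+1)$ upper bidiagonal matrix. Both are invertible. Let $e_{N+1}=(0,\dots,0,1)^\top$. For $Y_h=(y_1,\dots,y_{N+1})^\top\in\mathbb{C}^{N+1}$ let $Z_h=(z_0,\dots,z_N)^\top$ (the ''shadow element'' of $Y_h$) be the unique solution of $D_h^\top Z_h=-M_h^\top Y_h+\tfrac{ik}{2}y_{N+1}e_{N+1}$, and define $$\mathcal{A}_hY_h=D_h^{-1}\Big[-iM_hZ_h-\tfrac{k}{h}y_{N+1}e_{N+1}\Big]=D_h^{-1}\Big[iM_h(D_h^\top)^{-1}\big(M_h^\top Y_h-\tfrac{ik}{2}y_{N+1}e_{N+1}\big)-\tfrac{k}{h}y_{N+1}e_{N+1}\Big].$$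 Equivalently, with $y_0:=0$, $z_{N+1}:=-iky_{N+1}$, $u_{j+\frac12}=\frac{u_j+u_{j+1}}2$, $\delta_xu_{j+\frac12}=\frac{u_{j+1}-u_j}{h}$, one has $z_{j+\frac12}=\delta_xy_{j+\frac12}$ for $0\le j\le N$, and $\widetilde Y_h=\mathcal{A}_hY_h$ is characterized by $\widetilde y_{j+\frac12}=-i\delta_xz_{j+\frac12}$ for $0\le j\le N$ (with $\widetilde y_0=0$). This is the order-reduction semi-discretization of $w_t=-iw_{xx}$, $w(0,t)=0$, $w_x(1,t)=-ikw(1,t)$. The inner product on $\mathbb{Y}_h=\mathbb{C}^{N+1}$ is $\langle Y_h,\widetilde Y_h\rangle_{\mathbb{Y}_h}=h\langle D_hY_h,D_h\widetilde Y_h\rangle$, where $\langle\cdot,\cdot\rangle$ is the standard inner product of $\mathbb{C}^{N+1}$. *)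

From mathcomp Require Import all_boot all_order all_algebra.
Set Implicit Arguments. Unset Strict Implicit. Unset Printing Implicit Defensive.
Import Order.TTheory GRing.Theory Num.Theory.
Local Open Scope ring_scope.

(* Indices: entry (j : 'I_(N.+1)) of a column vector corresponds to the
   paper's index j+1, i.e. Y j 0 = y_{j+1}; ord_max corresponds to N+1. *)

Section Defs.
Variable C : numClosedFieldType.

Definition hN (N : nat) : C := (N.+1%:R)^-1.

Definition Dh (N : nat) : 'M[C]_(N.+1) :=
  \matrix_(i, j) (if (i == j :> nat) || (i == j.+1 :> nat) then 2^-1 else 0).

Definition Mh (N : nat) : 'M[C]_(N.+1) :=
  \matrix_(i, j) ((hN N)^-1 *
     (if i == j :> nat then -1 else if j == i.+1 :> nat then 1 else 0)).

Definition eN (N : nat) : 'cV[C]_(N.+1) := delta_mx ord_max 0.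

Definition ylast (N : nat) (Y : 'cV[C]_(N.+1)) : C := Y ord_max 0.

Definition shadow (N : nat) (k : C) (Y : 'cV[C]_(N.+1)) : 'cV[C]_(N.+1) :=
  invmx (Dh N)^T *m (- ((Mh N)^T *m Y) + (('i * k / 2) * ylast Y) *: eN N).

Definition Ah (N : nat) (k : C) (Y : 'cV[C]_(N.+1)) : 'cV[C]_(N.+1) :=
  invmx (Dh N) *m (- ('i *: (Mh N *m shadow k Y)) - ((k / hN N) * ylast Y) *: eN N).

Definition stdip (N : nat) (u v : 'cV[C]_(N.+1)) : C :=
  \sum_(j < N.+1) u j 0 * (v j 0)^*.

Definition ipY (N : nat) (u v : 'cV[C]_(N.+1)) : C :=
  hN N * stdip (Dh N *m u) (Dh N *m v).

End Defs.

From mathcomp Require Import all_boot all_order all_algebra.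
From mathcomp Require Import ring.
Import Order.TTheory GRing.Theory Num.Theory.
Local Open Scope ring_scope.

(* Since h M_h^T = 2 (D_h - I), the real matrices M_h^T and D_h commute, so
   moving them across the standard inner product and using the defining
   equation of the shadow element gives
   <M_h Z_h, D_h Y_h> = -|M_h^T Y_h|^2 + (ik/2) y_{N+1} conj((M_h^T Y_h)_{N+1}).
   Hence
   <A_h Y_h, Y_h>_h = i h |M_h^T Y_h|^2 + k y_{N+1} conj(w), where
   w = (h/2) (M_h^T Y_h)_{N+1} - (D_h Y_h)_{N+1} = -y_{N+1}, again because
   h M_h^T = 2 (D_h - I).  The first term is purely imaginary. *)

Section Dissipativity.
Variables (C : numClosedFieldType) (N : nat).
Implicit Types (u v Y : 'cV[C]_(N.+1)) (A : 'M[C]_(N.+1)).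

Lemma stdipDl u1 u2 v : stdip (u1 + u2) v = stdip u1 v + stdip u2 v.
Proof. by rewrite /stdip -big_split; apply: eq_bigr => j _; rewrite mxE mulrDl. Qed.

Lemma stdipNl u v : stdip (- u) v = - stdip u v.
Proof. by rewrite /stdip -sumrN; apply: eq_bigr => j _; rewrite mxE mulNr. Qed.

Lemma stdipZl a u v : stdip (a *: u) v = a * stdip u v.
Proof. by rewrite /stdip mulr_sumr; apply: eq_bigr => j _; rewrite mxE mulrA. Qed.

Lemma stdip_eNl v : stdip (eN C N) v = (v ord_max 0)^*.
Proof.
rewrite /stdip (bigD1 ord_max) //= big1 ?addr0 => [|j /negbTE jN].
  by rewrite mxE !eqxx mul1r.
by rewrite mxE jN mul0r.
Qed.

Lemma stdip_ge0 u : 0 <= stdip u u.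
Proof. by apply: sumr_ge0 => j _; apply: mul_conjC_ge0. Qed.

Lemma stdip_mulmx_real A u v : map_mx Num.conj A = A ->
  stdip (A *m u) v = stdip u (A^T *m v).
Proof.
move=> A_real; rewrite /stdip.
under eq_bigr => j _ do rewrite mxE mulr_suml.
rewrite exchange_big; apply: eq_bigr => l _.
rewrite !mxE rmorph_sum mulr_sumr; apply: eq_bigr => j _.
have Ajl_real : (A j l)^* = A j l by rewrite -[in RHS]A_real mxE.
by rewrite !mxE rmorphM /= Ajl_real mulrCA mulrA.
Qed.

Lemma hN_gt0 : 0 < hN C N.
Proof. by rewrite invr_gt0 ltr0n. Qed.

Lemma hN_neq0 : hN C N != 0.
Proof. exact: lt0r_neq0 hN_gt0. Qed.

Lemma conj_hN : (hN C N)^* = hN C N.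
Proof. exact/conj_Creal/gtr0_real/hN_gt0. Qed.

Lemma Dh_real : map_mx Num.conj (Dh C N) = Dh C N.
Proof.
apply/matrixP => i j; rewrite !mxE; case: ifP => _; last exact: rmorph0.
by rewrite fmorphV rmorph_nat.
Qed.

Lemma Mh_real : map_mx Num.conj (Mh C N) = Mh C N.
Proof.
apply/matrixP => i j; rewrite !mxE rmorphM /= conj_Creal ?realV ?gtr0_real ?hN_gt0 //.
by case: ifP => _; [|case: ifP => _]; rewrite ?rmorphN1 ?rmorph1 ?rmorph0.
Qed.

Lemma Dh_unit : Dh C N \in unitmx.
Proof.
rewrite unitmxE det_trig.
  by rewrite unitfE; apply/prodf_neq0 => i _; rewrite mxE eqxx invr_eq0 pnatr_eq0.
apply/'forall_'forall_implyP => i j ij; rewrite mxE.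
by case: ifP => // /orP[] /eqP ij_eq; move: ij; rewrite ij_eq ?ltnn // ltnNge leqnSn.
Qed.

Lemma scale_hN_MhT : hN C N *: (Mh C N)^T = 2 *: (Dh C N - 1%:M).
Proof.
apply/matrixP => i j; rewrite !mxE mulVKf ?hN_neq0 //.
have [ij|nij] := eqVneq i j.
  by rewrite ij !eqxx /= mulr1n mulrBr mulfV ?pnatr_eq0 // mulr1 -opprB; ring.
rewrite eq_sym (inj_eq val_inj) (negbTE nij) /= subr0.
by case: ifP => _; rewrite ?mulr0 ?mulfV ?pnatr_eq0.
Qed.

Lemma MhT_Dh_comm : (Mh C N)^T *m Dh C N = Dh C N *m (Mh C N)^T.
Proof.
apply: (scalerI hN_neq0); rewrite scalemxAl scalemxAr scale_hN_MhT.
by rewrite -scalemxAl -scalemxAr mulmxBl mulmxBr mul1mx mulmx1.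
Qed.

Lemma hN_MhT_last Y :
  hN C N / 2 * ((Mh C N)^T *m Y) ord_max 0
  = (Dh C N *m Y) ord_max 0 - Y ord_max 0.
Proof.
have := congr1 (fun B => (B *m Y) ord_max 0) scale_hN_MhT.
rewrite -!scalemxAl mulmxBl mul1mx !mxE /= => scaled.
by rewrite mulrAC scaled mulrC mulKf ?pnatr_eq0.
Qed.

Lemma ipY_Ah_rect k Y :
  ipY (Ah k Y) Y = - k * `|ylast Y| ^+ 2
    + 'i * (hN C N * stdip ((Mh C N)^T *m Y) ((Mh C N)^T *m Y)).
Proof.
set a := (Mh C N)^T *m Y; set y := ylast Y.
have DtZ : (Dh C N)^T *m shadow k Y = - a + ('i * k / 2 * y) *: eN C N.
  by rewrite /shadow mulKVmx // unitmx_tr Dh_unit.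
have DAY : Dh C N *m Ah k Y = - ('i *: (Mh C N *m shadow k Y)) - (k / hN C N * y) *: eN C N.
  by rewrite /Ah mulKVmx // Dh_unit.
have MZ_DY : stdip (Mh C N *m shadow k Y) (Dh C N *m Y)
    = - stdip a a + 'i * k / 2 * y * (a ord_max 0)^*.
  rewrite stdip_mulmx_real ?Mh_real // mulmxA MhT_Dh_comm -mulmxA -/a.
  rewrite -[Dh C N]trmxK -stdip_mulmx_real; last by rewrite -map_trmx Dh_real.
  by rewrite DtZ stdipDl stdipNl stdipZl stdip_eNl.
rewrite /ipY DAY stdipDl !stdipNl !stdipZl MZ_DY stdip_eNl.
have -> : (Dh C N *m Y) ord_max 0 = hN C N / 2 * a ord_max 0 + y by rewrite hN_MhT_last subrK.
rewrite normCK rmorphD !rmorphM /= conj_hN fmorphV rmorph_nat.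
rewrite !mulrDr -!mulrA (mulrA 'i 'i) -expr2 sqrCi.
field; exact: hN_neq0.
Qed.

End Dissipativity.

Theorem lemma2 (C : numClosedFieldType) (k : C) (N : nat)
  (hk : 0 < k) (hN : (0 < N)%N) (Y : 'cV[C]_(N.+1)) :
  'Re (ipY (Ah k Y) Y) = - k * `|ylast Y| ^+ 2
  /\ 'Re (ipY (Ah k Y) Y) <= 0.
Proof.
(* The identity also holds for N = 0; the unused binder hN shadows the mesh size. *)
clear hN.
have dissipation_real : - k * `|ylast Y| ^+ 2 \is Num.real.
  by apply: rpredM; [rewrite realN (gtr0_real hk) | exact/rpredX/normr_real].
have energy_real : hN C N * stdip ((Mh C N)^T *m Y) ((Mh C N)^T *m Y) \is Num.real.
  by rewrite ger0_real // mulr_ge0 ?stdip_ge0 ?ltW ?hN_gt0.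
rewrite ipY_Ah_rect Re_rect //; split => //.
by rewrite mulNr oppr_le0 mulr_ge0 ?(ltW hk) ?exprn_ge0.
Qed.
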